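(* Let $k\ge 0$ and $l\ge 1$ be integers such that the $k$th and $(k+l)$th Hopf bifurcations are nondegenerate. Then $\mu_k(lT^k_0+1)=\mu_{k+l}$ and $\frac{T^k_0}{lT^k_0+1}=T^{k+l}_0$. Moreover, near the bifurcation points the Cooke transform $C_l$ maps the $k$th Hopf branch into the $(k+l)$th Hopf branch. That is, for all sufficiently small $\eta>0$ there exists $\eta'\in(0,\eta_{k+l})$ such that $$C_l\big(\mu_k+\delta_k\eta,\;T^k_\eta,\;p^k_\eta\big)=\big(\mu_{k+l}+\delta_{k+l}\eta',\;T^{k+l}_{\eta'},\;p^{k+l}_{\eta'}\big),$$ where the periodic solutions are identified up to a time translation.
   Context: Consider the scalar delay differential equation (1) $x'(t)=-\mu f(x(t-1))$, with real parameter $\mu$ and phase space $C([-1,0],\mathbb R)$. Here $f:\mathbb R\to\mathbb R$ is $C^3$ with $f(0)=0$ and $f'(0)=1$, so that $f(\xi)=\xi+B\xi^2+C\xi^3+o(\xi^3)$ with $B=f''(0)/2$ and $C=f'''(0)/6$. For $k\in\mathbb Z$ let $\mu_k=\frac{(4k+1)\pi}{2}$ and $H(k)=\frac{22(4k+1)\pi-8}{15(4k+1)\pi}$. The $k$th Hopf bifurcation (at $\mu_k$) is supercritical if $C<H(k)B^2$ and subcritical if $C>H(k)B^2$; it is called nondegenerate if $C\ne H(k)B^2$. Supercritical means the bifurcating small periodic orbits are stable within the center manifold; subcritical means they are unstable there. Hopf branch notation, for $k\ge0$ with a nondegenerate $k$th bifurcation: put $\delta_k=1$ if it is supercritical and $\delta_k=-1$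 if it is subcritical. There are $\eta_k>0$ and a family of nonconstant periodic solutions $p^k_\eta$, $\eta\in(0,\eta_k)$, of (1) with parameter $\mu=\mu_k+\delta_k\eta$. These bifurcate from $0$ at $\mu_k$ (amplitude $\to0$ as $\eta\to0$), and they are locally unique up to time translation. $T^k_\eta$ denotes the minimal period of $p^k_\eta$, and $T^k_\eta\to T^k_0:=\frac{4}{4k+1}$ as $\eta\to0$. Cooke transform: for $l\in\mathbb N$, $C_l(\mu_*,T,p)=\big(\mu_*(lT+1),\,\frac{T}{lT+1},\,t\mapsto p((lT+1)t)\big)$, where $p$ is a periodic solution of (1) with parameter $\mu_*>0$ and period $T$. *)

From Stdlib Require Import Reals Lra.
Open Scope R_scope.

Definition C3_with (f f1 f2 f3 : R -> R) : Prop :=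
  (forall x, derivable_pt_lim f x (f1 x)) /\
  (forall x, derivable_pt_lim f1 x (f2 x)) /\
  (forall x, derivable_pt_lim f2 x (f3 x)) /\
  continuity f3.

Definition mu_ (k : nat) : R := (4 * INR k + 1) * PI / 2.

Definition H_ (k : nat) : R :=
  (22 * (4 * INR k + 1) * PI - 8) / (15 * (4 * INR k + 1) * PI).

Definition T0_ (k : nat) : R := 4 / (4 * INR k + 1).

(* B = f''(0)/2, C = f'''(0)/6 *)
Definition nondegenerate (B C : R) (k : nat) : Prop := C <> H_ k * B ^ 2.
Definition supercritical (B C : R) (k : nat) : Prop := C < H_ k * B ^ 2.
Definition subcritical (B C : R) (k : nat) : Prop := C > H_ k * B ^ 2.

Definition delta_spec (B C : R) (k : nat) (d : R) : Prop :=
  (supercritical B C k /\ d = 1) \/ (subcritical B C k /\ d = -1).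

Definition is_solution (f : R -> R) (mu : R) (x : R -> R) : Prop :=
  forall t, derivable_pt_lim x t (- mu * f (x (t - 1))).

Definition is_period (x : R -> R) (T : R) : Prop :=
  forall t, x (t + T) = x t.

Definition minimal_period (x : R -> R) (T : R) : Prop :=
  0 < T /\ is_period x T /\ (forall S, 0 < S < T -> ~ is_period x S).

Definition nonconstant (x : R -> R) : Prop := exists t s, x t <> x s.

Definition periodic_solution (f : R -> R) (mu T : R) (x : R -> R) : Prop :=
  is_solution f mu x /\ nonconstant x /\ minimal_period x T.

Definition time_translate (x y : R -> R) : Prop :=
  exists s, forall t, y t = x (t + s).

(* The k-th Hopf branch: eta0 = eta_k, p eta = p^k_eta, T eta = T^k_eta,
   parameter mu_k + d * eta with d = delta_k. *)
Definition hopf_branch (f : R -> R) (k : nat) (d eta0 : R)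
    (p : R -> R -> R) (T : R -> R) : Prop :=
  0 < eta0 /\
  (forall eta, 0 < eta < eta0 ->
      periodic_solution f (mu_ k + d * eta) (T eta) (p eta)) /\
  (forall eps, 0 < eps -> exists e, 0 < e /\
      forall eta, 0 < eta < eta0 -> eta < e -> forall t, Rabs (p eta t) < eps) /\
  (forall eps, 0 < eps -> exists e, 0 < e /\
      forall eta, 0 < eta < eta0 -> eta < e -> Rabs (T eta - T0_ k) < eps) /\
  (exists eps, 0 < eps /\
      forall mu S x, Rabs (mu - mu_ k) < eps -> Rabs (S - T0_ k) < eps ->
        (forall t, Rabs (x t) < eps) -> periodic_solution f mu S x ->
        exists eta, 0 < eta < eta0 /\ mu = mu_ k + d * eta /\ S = T eta /\
                    time_translate (p eta) x).

Definition cooke (l : nat) (mu T : R) (p : R -> R) : R * R * (R -> R) :=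
  (mu * (INR l * T + 1), T / (INR l * T + 1), fun t => p ((INR l * T + 1) * t)).

(* For the
   branches: rescaling time by c = l T + 1 maps a T-periodic solution with
   parameter mu to a T/c-periodic solution with parameter mu c, because the
   delay 1 becomes c - 1 + 1 = l T + 1 and l T is a multiple of the period.
   The Cooke images of the k-th branch are therefore periodic solutions whose
   parameter, period and amplitude tend to (mu_(k+l), T0_(k+l), 0), so local
   uniqueness of the (k+l)-th branch places them on it. *)

From Stdlib Require Import Reals Lra Psatz.
Open Scope R_scope.

Lemma is_period_mult_INR (p : R -> R) (T : R) (n : nat) :
  is_period p T -> is_period p (INR n * T).
Proof.
  intros HP; induction n as [|n IH]; intros x.
  - simpl; f_equal; ring.
  - rewrite S_INR.
    replace (x + (INR n + 1) * T) with (x + INR n * T + T) by ring.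
    rewrite HP; apply IH.
Qed.

Lemma is_solution_scale (f : R -> R) (mu c : R) (p : R -> R) :
  is_solution f mu p -> is_period p (c - 1) ->
  is_solution f (mu * c) (fun t => p (c * t)).
Proof.
  intros Hs HP t.
  assert (Hdelay : p (c * t - 1) = p (c * (t - 1))).
  { replace (c * t - 1) with (c * (t - 1) + (c - 1)) by ring; apply HP. }
  replace (- (mu * c) * f (p (c * (t - 1))))
    with (- mu * f (p (c * t - 1)) * c) by (rewrite Hdelay; ring).
  change (fun t => p (c * t)) with (comp p (mult_real_fct c id)).
  apply derivable_pt_lim_comp; [|apply Hs].
  pose proof (derivable_pt_lim_scal id c t 1 (derivable_pt_lim_id t)) as Hd.
  rewrite Rmult_1_r in Hd; exact Hd.
Qed.

Lemma nonconstant_scale (p : R -> R) (c : R) :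
  c <> 0 -> nonconstant p -> nonconstant (fun t => p (c * t)).
Proof.
  intros Hc [t [s Hts]]; exists (t / c), (s / c).
  replace (c * (t / c)) with t by (field; exact Hc).
  replace (c * (s / c)) with s by (field; exact Hc).
  exact Hts.
Qed.

Lemma minimal_period_scale (p : R -> R) (c T : R) :
  0 < c -> minimal_period p T -> minimal_period (fun t => p (c * t)) (T / c).
Proof.
  intros Hc [HT [HP Hmin]]; split; [|split].
  - apply Rdiv_lt_0_compat; assumption.
  - intros t; replace (c * (t + T / c)) with (c * t + T) by (field; lra).
    apply HP.
  - intros S [HS HST] HPS; apply (Hmin (c * S)).
    + split; [nra|].
      apply (Rmult_lt_compat_l c) in HST; [|exact Hc].
      replace (c * (T / c)) with T in HST by (field; lra); exact HST.
    + intros x; specialize (HPS (x / c)); cbv beta in HPS.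
      replace (c * (x / c + S)) with (x + c * S) in HPS by (field; lra).
      replace (c * (x / c)) with x in HPS by (field; lra); exact HPS.
Qed.

Lemma periodic_solution_cooke (f : R -> R) (mu T : R) (n : nat) (p : R -> R) :
  periodic_solution f mu T p ->
  periodic_solution f (mu * (INR n * T + 1)) (T / (INR n * T + 1))
    (fun t => p ((INR n * T + 1) * t)).
Proof.
  intros [Hs [Hnc Hmin]].
  pose proof Hmin as [HT [HP _]].
  assert (Hc : 0 < INR n * T + 1) by (pose proof (pos_INR n); nra).
  split; [|split].
  - apply is_solution_scale; [exact Hs|].
    replace (INR n * T + 1 - 1) with (INR n * T) by ring.
    apply is_period_mult_INR, HP.
  - apply nonconstant_scale; [lra | exact Hnc].
  - apply minimal_period_scale; assumption.
Qed.

Lemma mu_cooke (k l : nat) : mu_ k * (INR l * T0_ k + 1) = mu_ (k + l).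
Proof.
  pose proof (pos_INR k); unfold mu_, T0_; rewrite plus_INR; field; lra.
Qed.

Lemma T0_cooke (k l : nat) : T0_ k / (INR l * T0_ k + 1) = T0_ (k + l).
Proof.
  pose proof (pos_INR k); pose proof (pos_INR l).
  unfold T0_; rewrite plus_INR; field; split; lra.
Qed.

Lemma T0_gt0 (k : nat) : 0 < T0_ k.
Proof.
  pose proof (pos_INR k); unfold T0_; apply Rdiv_lt_0_compat; lra.
Qed.

Lemma delta_spec_Rabs (B C : R) (k : nat) (d : R) :
  delta_spec B C k d -> Rabs d = 1.
Proof.
  intros [[_ ->] | [_ ->]]; unfold Rabs; destruct Rcase_abs; lra.
Qed.

Lemma cooke_period_dist (L T T0 : R) :
  0 <= L -> 0 < T -> 0 < T0 ->
  Rabs (T / (L * T + 1) - T0 / (L * T0 + 1)) <= Rabs (T - T0).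
Proof.
  intros HL HT HT0.
  assert (A : 0 <= L * T) by nra.
  assert (A0 : 0 <= L * T0) by nra.
  replace (T / (L * T + 1) - T0 / (L * T0 + 1))
    with ((T - T0) * / ((L * T + 1) * (L * T0 + 1))) by (field; lra).
  rewrite Rabs_mult, (Rabs_pos_eq (/ _))
    by (left; apply Rinv_0_lt_compat; nra).
  assert (/ ((L * T + 1) * (L * T0 + 1)) <= 1).
  { rewrite <- Rinv_1; apply Rinv_le_contravar; nra. }
  pose proof (Rabs_pos (T - T0)); nra.
Qed.

Lemma cooke_param_dist (L mu mu0 T T0 : R) :
  0 <= L -> Rabs (T - T0) < 1 ->
  Rabs (mu * (L * T + 1) - mu0 * (L * T0 + 1))
    <= Rabs (mu - mu0) * (L * (Rabs T0 + 1) + 1) + Rabs mu0 * L * Rabs (T - T0).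
Proof.
  intros HL HT.
  replace (mu * (L * T + 1) - mu0 * (L * T0 + 1))
    with ((mu - mu0) * (L * T + 1) + mu0 * L * (T - T0)) by ring.
  eapply Rle_trans; [apply Rabs_triang|].
  rewrite !Rabs_mult, (Rabs_pos_eq L HL).
  assert (Rabs (L * T + 1) <= L * (Rabs T0 + 1) + 1).
  { eapply Rle_trans; [apply Rabs_triang|].
    rewrite Rabs_R1, Rabs_mult, (Rabs_pos_eq L HL).
    assert (Rabs T <= Rabs T0 + 1).
    { pose proof (Rabs_triang_inv T T0); lra. }
    nra. }
  pose proof (Rabs_pos (mu - mu0)); nra.
Qed.

Lemma cooke_params_continuous (L mu0 T0 : R) :
  0 <= L -> 0 < T0 ->
  forall eps, 0 < eps -> exists del, 0 < del /\
    forall mu T, 0 < T -> Rabs (mu - mu0) < del -> Rabs (T - T0) < del ->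
      Rabs (mu * (L * T + 1) - mu0 * (L * T0 + 1)) < eps /\
      Rabs (T / (L * T + 1) - T0 / (L * T0 + 1)) < eps.
Proof.
  intros HL HT0 eps Heps.
  set (A := L * (Rabs T0 + 1) + 1).
  set (K := A + Rabs mu0 * L).
  assert (HA : 1 <= A) by (pose proof (Rabs_pos T0); unfold A; nra).
  assert (HK : 1 <= K) by (pose proof (Rabs_pos mu0); unfold K; nra).
  set (d := eps / K).
  assert (Hd : 0 < d) by (apply Rdiv_lt_0_compat; lra).
  assert (HdK : d * K = eps) by (unfold d; field; lra).
  assert (Hd_eps : d <= eps) by nra.
  exists (Rmin 1 d); split; [apply Rmin_pos; lra|].
  intros mu T HT Hmu HTT.
  apply Rmin_Rgt in Hmu as [_ Hmu]; apply Rmin_Rgt in HTT as [HT1 HTd].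
  split.
  - eapply Rle_lt_trans; [apply cooke_param_dist; assumption|].
    fold A.
    assert (Rabs (mu - mu0) * A < d * A) by (apply Rmult_lt_compat_r; lra).
    assert (Rabs mu0 * L * Rabs (T - T0) <= Rabs mu0 * L * d).
    { apply Rmult_le_compat_l; [pose proof (Rabs_pos mu0); nra | lra]. }
    unfold K in HdK; nra.
  - eapply Rle_lt_trans; [apply cooke_period_dist; assumption|]; lra.
Qed.

Theorem proposition1
  (f f1 f2 f3 : R -> R)
  (Hf : C3_with f f1 f2 f3) (Hf0 : f 0 = 0) (Hf10 : f1 0 = 1)
  (k l : nat) (Hl : (1 <= l)%nat)
  (Hk : nondegenerate (f2 0 / 2) (f3 0 / 6) k)
  (Hkl : nondegenerate (f2 0 / 2) (f3 0 / 6) (k + l))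
  (dk dkl etak etakl : R) (pk pkl : R -> R -> R) (Tk Tkl : R -> R)
  (Hdk : delta_spec (f2 0 / 2) (f3 0 / 6) k dk)
  (Hdkl : delta_spec (f2 0 / 2) (f3 0 / 6) (k + l) dkl)
  (Hbk : hopf_branch f k dk etak pk Tk)
  (Hbkl : hopf_branch f (k + l) dkl etakl pkl Tkl) :
  mu_ k * (INR l * T0_ k + 1) = mu_ (k + l) /\
  T0_ k / (INR l * T0_ k + 1) = T0_ (k + l) /\
  exists e, 0 < e /\
    forall eta, 0 < eta < etak -> eta < e ->
      exists eta', 0 < eta' < etakl /\
        let '(m, P, q) := cooke l (mu_ k + dk * eta) (Tk eta) (pk eta) in
        m = mu_ (k + l) + dkl * eta' /\
        P = Tkl eta' /\
        time_translate (pkl eta') q.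
Proof.
  split; [apply mu_cooke|]; split; [apply T0_cooke|].
  destruct Hbk as [_ [Hsol [Hamp [HTk _]]]].
  destruct Hbkl as [_ [_ [_ [_ [eps [Heps Hunique]]]]]].
  destruct (cooke_params_continuous (INR l) (mu_ k) (T0_ k) (pos_INR l)
              (T0_gt0 k) eps Heps) as [del [Hdel Hcooke]].
  destruct (Hamp eps Heps) as [e1 [He1 Hsmall]].
  destruct (HTk del Hdel) as [e2 [He2 HTclose]].
  exists (Rmin del (Rmin e1 e2)); split; [repeat apply Rmin_pos; assumption|].
  intros eta Heta Hlt.
  apply Rmin_Rgt in Hlt as [Hlt_del Hlt]; apply Rmin_Rgt in Hlt as [Hlt1 Hlt2].
  pose proof (Hsol eta Heta) as Hper.
  assert (HTpos : 0 < Tk eta) by (destruct Hper as [_ [_ [HTpos _]]]; exact HTpos).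
  assert (Hmu : Rabs (mu_ k + dk * eta - mu_ k) < del).
  { replace (mu_ k + dk * eta - mu_ k) with (dk * eta) by ring.
    rewrite Rabs_mult, (delta_spec_Rabs _ _ _ _ Hdk), Rabs_pos_eq; lra. }
  destruct (Hcooke _ _ HTpos Hmu (HTclose eta Heta Hlt2))
    as [Hm HP].
  rewrite mu_cooke in Hm; rewrite T0_cooke in HP.
  destruct (Hunique _ _ _ Hm HP (fun t => Hsmall eta Heta Hlt1 _)
              (periodic_solution_cooke f _ _ l _ Hper))
    as [eta' [Heta' [Hm' [HP' Htr]]]].
  exists eta'; split; [exact Heta'|].
  unfold cooke; repeat split; assumption.
Qed.
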